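(* Let $G$ and $H$ be groups and $f:G\to H$ a function such that for all $x,x'\in G$ there is $h\in H$ (depending on $x,x'$) with $f(xx')=f(x)^h\,f(x')$. Let $G_0$, $G_1$ be groups, $f_0:G_0\to H$ and $f_1:G_1\to H$ functions, $c\in H$, and $k\ge2$ an integer. If the set $\{(x_0,x,x_1)\in G_0\times G\times G_1: f_0(x_0)\,f(x)\,f_1(x_1)=c\}$ is $k$-large in $G_0\times G\times G_1$, then $f(g)=1$ for all $g\in G$, and the set $\{(x_0,x_1)\in G_0\times G_1:f_0(x_0)\,f_1(x_1)=c\}$ is $k$-large in $G_0\times G_1$.
   Context: $a^h=h^{-1}ah$. A subset $X$ of a group $K$ is $k$-large in $K$ if the intersection of any $k$ left translates $a_1X\cap\dots\cap a_kX$ ($a_i\in K$) is non-empty. *)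

From Stdlib Require Import Arith.

Record Group := {
  carrier :> Type;
  gmul : carrier -> carrier -> carrier;
  gone : carrier;
  ginv : carrier -> carrier;
  gmul_assoc : forall x y z, gmul x (gmul y z) = gmul (gmul x y) z;
  gmul_1l : forall x, gmul gone x = x;
  gmul_1r : forall x, gmul x gone = x;
  gmul_Vl : forall x, gmul (ginv x) x = gone;
  gmul_Vr : forall x, gmul x (ginv x) = gone
}.

Arguments gmul {g} _ _.
Arguments gone {g}.
Arguments ginv {g} _.

Definition gconj {K : Group} (a h : K) : K := gmul (ginv h) (gmul a h).

(* X is k-large in K: any k left translates a_1 X, ..., a_k X meet. *)
Definition k_large (K : Group) (k : nat) (X : K -> Prop) : Prop :=
  forall a : nat -> K, exists y : K,
    forall i, i < k -> exists x, X x /\ y = gmul (a i) x.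

Definition prod2 (A B : Group) : Group.
Proof.
refine {| carrier := (A * B)%type;
          gmul := fun p q => (gmul (fst p) (fst q), gmul (snd p) (snd q));
          gone := (gone, gone);
          ginv := fun p => (ginv (fst p), ginv (snd p)) |}.
- intros [] [] []; simpl; rewrite !gmul_assoc; reflexivity.
- intros []; simpl; rewrite !gmul_1l; reflexivity.
- intros []; simpl; rewrite !gmul_1r; reflexivity.
- intros []; simpl; rewrite !gmul_Vl; reflexivity.
- intros []; simpl; rewrite !gmul_Vr; reflexivity.
Defined.

Definition prod3 (A B C : Group) : Group.
Proof.
refine {| carrier := (A * B * C)%type;
          gmul := fun p q => (gmul (fst (fst p)) (fst (fst q)),
                              gmul (snd (fst p)) (snd (fst q)),
                              gmul (snd p) (snd q));
          gone := (gone, gone, gone);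
          ginv := fun p => (ginv (fst (fst p)), ginv (snd (fst p)), ginv (snd p)) |}.
- intros [[]] [[]] [[]]; simpl; rewrite !gmul_assoc; reflexivity.
- intros [[]]; simpl; rewrite !gmul_1l; reflexivity.
- intros [[]]; simpl; rewrite !gmul_1r; reflexivity.
- intros [[]]; simpl; rewrite !gmul_Vl; reflexivity.
- intros [[]]; simpl; rewrite !gmul_Vr; reflexivity.
Defined.

From Stdlib Require Import Arith Lia.

(* Two translates [X] and [(1,g,1) X] of the large set meet, which yields
   [f(g v) = f(v)] for some [v]; since [f(g v) = f(g)^h f(v)], this forces
   [f(g) = 1].  With [f] trivial, the set in [G0 x G x G1] lies over the set
   in [G0 x G1], and largeness passes down along the projection. *)

Lemma gmul_cancel_l (K : Group) (a x y : K) : gmul a x = gmul a y -> x = y.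
Proof.
  intro E. rewrite <- (gmul_1l K x), <- (gmul_1l K y), <- (gmul_Vl K a),
    <- !gmul_assoc, E. reflexivity.
Qed.

Lemma gmul_cancel_r (K : Group) (a x y : K) : gmul x a = gmul y a -> x = y.
Proof.
  intro E. rewrite <- (gmul_1r K x), <- (gmul_1r K y), <- (gmul_Vr K a),
    !gmul_assoc, E. reflexivity.
Qed.

Lemma gconj_eq1 (K : Group) (a h : K) : gconj a h = gone -> a = gone.
Proof.
  unfold gconj. intro E.
  apply (gmul_cancel_l K (ginv h)), (gmul_cancel_r K h).
  rewrite <- gmul_assoc, E, gmul_1r, gmul_Vl. reflexivity.
Qed.

Lemma quasi_hom_eq1 (G H : Group) (f : G -> H)
  (hf : forall x x' : G, exists h : H, f (gmul x x') = gmul (gconj (f x) h) (f x'))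
  (g v : G) : f (gmul g v) = f v -> f g = gone.
Proof.
  intro E. destruct (hf g v) as [h Hh]. rewrite E in Hh.
  apply (gconj_eq1 H (f g) h), (gmul_cancel_r H (f v)).
  rewrite gmul_1l. symmetry. exact Hh.
Qed.

Lemma k_large_translate (K : Group) (k : nat) (X : K -> Prop) :
  2 <= k -> k_large K k X ->
  forall a : K, exists x x', X x /\ X x' /\ x = gmul a x'.
Proof.
  intros hk hX a.
  destruct (hX (fun i => match i with 0 => gone | _ => a end)) as [y Hy].
  destruct (Hy 0 ltac:(lia)) as [x [Xx Ex]].
  destruct (Hy 1 ltac:(lia)) as [x' [Xx' Ex']].
  exists x, x'. split; [exact Xx|]. split; [exact Xx'|].
  rewrite <- (gmul_1l K x). congruence.
Qed.

Lemma k_large_hom (K L : Group) (p : K -> L) (s : L -> K)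
  (p_mul : forall x y, p (gmul x y) = gmul (p x) (p y))
  (p_s : forall a, p (s a) = a)
  (k : nat) (X : K -> Prop) (Y : L -> Prop) (XY : forall x, X x -> Y (p x)) :
  k_large K k X -> k_large L k Y.
Proof.
  intros hX a. destruct (hX (fun i => s (a i))) as [y Hy].
  exists (p y). intros i Hi. destruct (Hy i Hi) as [x [Xx Ex]].
  exists (p x). split; [exact (XY x Xx)|].
  rewrite Ex, p_mul, p_s. reflexivity.
Qed.

Theorem theorem5p1 (G H G0 G1 : Group) (f : G -> H)
  (hf : forall x x' : G, exists h : H, f (gmul x x') = gmul (gconj (f x) h) (f x'))
  (f0 : G0 -> H) (f1 : G1 -> H) (c : H) (k : nat) (hk : 2 <= k)
  (hlarge : k_large (prod3 G0 G G1) k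
     (fun t : prod3 G0 G G1 =>
        gmul (gmul (f0 (fst (fst t))) (f (snd (fst t)))) (f1 (snd t)) = c)) :
  (forall g : G, f g = gone) /\
  k_large (prod2 G0 G1) k
     (fun p : prod2 G0 G1 => gmul (f0 (fst p)) (f1 (snd p)) = c).
Proof.
  assert (f_eq1 : forall g : G, f g = gone).
  { intro g.
    destruct (k_large_translate _ _ _ hk hlarge ((gone, g, gone) : prod3 G0 G G1))
      as [[[u0 u] u1] [[[v0 v] v1] [Xu [Xv E]]]].
    simpl in Xu, Xv, E. injection E as E0 E E1.
    rewrite gmul_1l in E0, E1. subst u0 u1 u.
    apply (quasi_hom_eq1 G H f hf g v).
    apply (gmul_cancel_l H (f0 v0)), (gmul_cancel_r H (f1 v1)).
    rewrite Xu, Xv. reflexivity. }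
  split; [exact f_eq1|].
  refine (k_large_hom (prod3 G0 G G1) (prod2 G0 G1)
            (fun t => (fst (fst t), snd t)) (fun a => (fst a, gone, snd a))
            _ _ k _ _ _ hlarge).
  - intros [[] ] [[] ]. reflexivity.
  - intros []. reflexivity.
  - intros [[x0 x] x1] X. simpl in *. rewrite f_eq1, gmul_1r in X. exact X.
Qed.
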